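(* Let $f_0\in\mathbb{R}$, $g\in\mathbb{R}^n$, $H$ a symmetric $n\times n$ matrix, $\sigma>0$, and $m(s)=f_0+\langle g,s\rangle+\frac12\langle Hs,s\rangle+\frac16\sigma\|s\|^3$. Let $s_k\in\mathbb{R}^n$ with $m(s_k)\le m(0)$, set $g_k=g+Hs_k$, and assume $\|g_k\|_{r,1}<\frac12\sigma\|s_k\|^2$. Let $\alpha_k^R$ be a minimizer of $\alpha\mapsto m(s_k-\alpha s_k)$ over $\alpha\ge0$ and $s_k^R=(1-\alpha_k^R)s_k$. Then $$m(s_k)-m(s_k^R)\ge\frac12\min\left[\frac{\big|\|g_k\|_{r,1}-\frac12\sigma\|s_k\|^2\big|^2}{1+\frac32(\|H\|_{r,2}+\sigma\|s_k\|)},\ \frac{\big|\|g_k\|_{r,1}-\frac12\sigma\|s_k\|^2\big|^{3/2}}{3\sqrt\sigma}\right].$$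
   Context: $\|\cdot\|$ is an arbitrary (possibly non-smooth) norm on $\mathbb{R}^n$, $\langle\cdot,\cdot\rangle$ the Euclidean inner product, $\|v\|_{r,1}=\max_{\|s\|=1}|\langle v,s\rangle|$ the dual norm, and for a symmetric matrix $H$, $\|H\|_{r,2}=\max_{\|v\|=1}|\langle Hv,v\rangle|$. *)

From HB Require Import structures.
From mathcomp Require Import all_boot all_order all_algebra.
From mathcomp Require Import all_classical all_reals all_analysis.
Set Implicit Arguments. Unset Strict Implicit. Unset Printing Implicit Defensive.
Import Order.TTheory GRing.Theory Num.Theory.
Local Open Scope ring_scope.
Local Open Scope classical_set_scope.

Definition dotp (R : realType) (n : nat) (u v : 'cV[R]_n) : R :=
  \sum_(i < n) u i 0 * v i 0.

Definition is_norm (R : realType) (n : nat) (nrm : 'cV[R]_n -> R) : Prop :=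
  [/\ (forall x, 0 <= nrm x),
      (forall x, nrm x = 0 -> x = 0),
      (forall (a : R) x, nrm (a *: x) = `|a| * nrm x)
    & (forall x y, nrm (x + y) <= nrm x + nrm y)].

(* Dual norm ||v||_{r,1} = max_{||s||=1} |<v,s>| (the max is a sup). *)
Definition dual_norm (R : realType) (n : nat) (nrm : 'cV[R]_n -> R)
  (v : 'cV[R]_n) : R :=
  sup [set `|dotp v s| | s in [set s | nrm s = 1]].

(* ||H||_{r,2} = max_{||v||=1} |<Hv,v>|. *)
Definition mat_norm2 (R : realType) (n : nat) (nrm : 'cV[R]_n -> R)
  (H : 'M[R]_n) : R :=
  sup [set `|dotp (H *m v) v| | v in [set v | nrm v = 1]].

Definition cubic_model (R : realType) (n : nat) (nrm : 'cV[R]_n -> R)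
  (f0 : R) (g : 'cV[R]_n) (H : 'M[R]_n) (sigma : R) (s : 'cV[R]_n) : R :=
  f0 + dotp g s + 2^-1 * dotp (H *m s) s + 6^-1 * sigma * nrm s ^+ 3.

From HB Require Import structures.
From mathcomp Require Import all_boot all_order all_algebra.
From mathcomp Require Import all_classical all_reals all_analysis.
From mathcomp Require Import ring lra.
Import Order.TTheory GRing.Theory Num.Theory.
Import numFieldTopology.Exports numFieldNormedType.Exports.
Local Open Scope ring_scope.

(* Write rho = ||s_k||, D = ||g_k||_{r,1}, M = ||H||_{r,2},
   d = sigma/2 rho^2 - D > 0 and K = M + sigma rho.  Along the ray,
   m((1 - a) s_k) is a cubic polynomial in a, and the two generalized
   Cauchy-Schwarz bounds <g_k, s_k> >= -D rho and <H s_k, s_k> <= M rho^2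
   give  m(s_k) - m((1 - a) s_k) >= a rho d - a^2/2 rho^2 K  for a >= 0.
   The step a = d / (rho K) lies in [0, 1] and yields the decrease
   d^2 / (2K); since alpha^R minimizes over a >= 0, s_k^R does at least as
   well, and d^2 / (2K) dominates the first term of the claimed minimum. *)

Section NormFacts.
Variables (R : realType) (n : nat) (nrm : 'cV[R]_n -> R).
Hypothesis nrm_norm : is_norm nrm.

Lemma nrm_ge0 (x : 'cV[R]_n) : 0 <= nrm x.
Proof. by case: nrm_norm. Qed.

Lemma nrmZ (a : R) (x : 'cV[R]_n) : nrm (a *: x) = `|a| * nrm x.
Proof. by case: nrm_norm. Qed.

Lemma nrm_eq0 (x : 'cV[R]_n) : (nrm x == 0) = (x == 0).
Proof.
apply/eqP/eqP => [|->]; first by case: nrm_norm => _ + _ _; apply.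
by rewrite -(scale0r 0) nrmZ normr0 mul0r.
Qed.

Lemma nrm0 : nrm 0 = 0.
Proof. by apply/eqP; rewrite nrm_eq0. Qed.

Lemma nrmN (x : 'cV[R]_n) : nrm (- x) = nrm x.
Proof. by rewrite -scaleN1r nrmZ normrN1 mul1r. Qed.

Lemma nrm_triangle (x y : 'cV[R]_n) : nrm (x + y) <= nrm x + nrm y.
Proof. by case: nrm_norm. Qed.

Lemma nrm_sum {I : Type} (r : seq I) (F : I -> 'cV[R]_n) :
  nrm (\sum_(i <- r) F i) <= \sum_(i <- r) nrm (F i).
Proof.
elim: r => [|a r IH]; first by rewrite !big_nil nrm0.
by rewrite !big_cons (le_trans (nrm_triangle _ _)) // lerD2l.
Qed.

Lemma nrm_dist (x y : 'cV[R]_n) : `|nrm x - nrm y| <= nrm (x - y).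
Proof.
have Hx := nrm_triangle (x - y) y; have Hy := nrm_triangle (y - x) x.
rewrite subrK in Hx; rewrite subrK -opprB nrmN in Hy.
by rewrite ler_norml; apply/andP; split; lra.
Qed.

Lemma entry_le_mx_norm (v : 'rV[R]_n) (i : 'I_n) : `|v 0 i| <= `|v|.
Proof.
by change (`|v 0 i| <= mx_norm v); rewrite mx_normrE; apply/bigmax_geP; right; exists (0, i).
Qed.

(* nrm is dominated by the max-norm: writing v in the canonical basis. *)
Lemma nrm_le_max_norm (v : 'rV[R]_n) :
  nrm v^T <= `|v| * \sum_(i < n) nrm (delta_mx i 0).
Proof.
rewrite {1}(matrix_sum_delta v^T) mulr_sumr.
apply: (le_trans (nrm_sum _ _)); apply: ler_sum => i _.
by rewrite big_ord1 nrmZ ler_wpM2r ?nrm_ge0 // mxE entry_le_mx_norm.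
Qed.

Lemma nrm_continuous : continuous (fun x : 'rV[R]_n => nrm x^T).
Proof.
move=> x; set K := \sum_(i < n) nrm (delta_mx i 0).
have K0 : 0 <= K by apply: sumr_ge0 => i _; exact: nrm_ge0.
move=> s /= /(nbhs_ballP (nrm x^T)) [e e0 es].
have eK : 0 < e / (K + 1) by rewrite divr_gt0 // ltr_wpDl.
apply/nbhs_ballP; exists (e / (K + 1)) => // y hy; apply: es.
move: hy; rewrite -!ball_normE /ball_ /= => hy.
apply: (le_lt_trans (nrm_dist _ _)).
have -> : x^T - y^T = (x - y)^T by rewrite linearB.
apply: (le_lt_trans (nrm_le_max_norm _)).
apply: (@le_lt_trans _ _ (`|x - y| * (K + 1))); first by rewrite ler_wpM2l // lerDl.
by rewrite -ltr_pdivlMr // ltr_wpDl.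
Qed.

(* The multiple is the minimum of nrm on the (compact) unit
   sphere of the max-norm, which is positive since nrm vanishes only at 0. *)
Lemma nrm_dominates_max_norm :
  exists2 m : R, 0 < m & forall v : 'rV[R]_n, m * `|v| <= nrm v^T.
Proof.
pose S := [set x : 'rV[R]_n | `|x| = 1]%classic.
have normalize v : v != 0 -> S (`|v|^-1 *: v) by move=> v0; rewrite /S /= normrZV ?unitfE ?normr_eq0.
have [[u Su]|S_empty] := pselect (S !=set0)%classic; last first.
  exists 1 => // v; have [->|v0] := eqVneq v 0; first by rewrite normr0 mulr0 nrm_ge0.
  by exfalso; apply: S_empty; exists (`|v|^-1 *: v); exact: normalize.
have cS : compact S.
  apply: bounded_closed_compact; first by exists 1; split => // M M1 x; rewrite /S /= => ->; exact: ltW.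
  apply: (@preimage_closed _ _ (@Num.norm _ 'rV[R]_n) (fun x : R => x = 1)).
    by move=> x _; exact: norm_continuous.
  exact: closed_eq.
have [c Sc cmin] := compact_EVT_min (ex_intro _ u Su) cS (continuous_subspaceT nrm_continuous).
move: Sc; rewrite in_setE /S /= => c1.
exists (nrm c^T) => [|v].
  rewrite lt_def nrm_ge0 andbT nrm_eq0; apply/eqP => /(congr1 trmx).
  by rewrite trmxK trmx0 => c0; move: c1; rewrite c0 normr0 => /eqP; rewrite eq_sym oner_eq0.
have [->|v0] := eqVneq v 0; first by rewrite normr0 mulr0 nrm_ge0.
have vpos : 0 < `|v| by rewrite normr_gt0.
have := cmin _ (mem_set (normalize v v0)).
rewrite linearZ /= nrmZ ger0_norm ?invr_ge0 ?normr_ge0 // mulrC.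
by rewrite ler_pdivlMr.
Qed.

Lemma unit_sphere_coord_bound :
  exists2 C : R, 0 <= C & forall s, nrm s = 1 -> forall i, `|s i 0| <= C.
Proof.
have [m m0 dominate] := nrm_dominates_max_norm.
exists m^-1 => [|s s1 i]; first by rewrite invr_ge0; exact: ltW.
have := dominate s^T; rewrite trmxK s1 mulrC -ler_pdivlMr // mul1r => max_le.
have -> : s i 0 = s^T 0 i by rewrite mxE.
exact: le_trans (entry_le_mx_norm _ _) max_le.
Qed.

End NormFacts.

Arguments nrm_ge0 {R n nrm}.
Arguments nrmZ {R n nrm}.
Arguments nrm_eq0 {R n nrm}.
Arguments unit_sphere_coord_bound {R n nrm}.

Lemma dotpZr (R : realType) (n : nat) (u v : 'cV[R]_n) (a : R) :
  dotp u (a *: v) = a * dotp u v.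
Proof. by rewrite /dotp mulr_sumr; apply: eq_bigr => i _; rewrite mxE mulrCA. Qed.

Lemma dotpZl (R : realType) (n : nat) (u v : 'cV[R]_n) (a : R) :
  dotp (a *: u) v = a * dotp u v.
Proof. by rewrite /dotp mulr_sumr; apply: eq_bigr => i _; rewrite mxE mulrA. Qed.

Lemma dotpDl (R : realType) (n : nat) (u w v : 'cV[R]_n) :
  dotp (u + w) v = dotp u v + dotp w v.
Proof. by rewrite /dotp -big_split; apply: eq_bigr => i _; rewrite mxE mulrDl. Qed.

Lemma quad_formZ (R : realType) (n : nat) (H : 'M[R]_n) (v : 'cV[R]_n) (a : R) :
  dotp (H *m (a *: v)) (a *: v) = a ^+ 2 * dotp (H *m v) v.
Proof. by rewrite -scalemxAr dotpZr dotpZl mulrA expr2. Qed.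

Section SphereSup.
Local Open Scope classical_set_scope.
Variables (R : realType) (n : nat) (nrm : 'cV[R]_n -> R).
Hypothesis nrm_norm : is_norm nrm.

(* Both ||.||_{r,1} and ||.||_{r,2} are suprema of |F| over the unit sphere. *)
Definition sphere_sup (F : 'cV[R]_n -> R) : R :=
  sup [set `|F s| | s in [set s | nrm s = 1]].

Lemma sphere_sup_ge0 (F : 'cV[R]_n -> R) :
  has_ubound [set `|F s| | s in [set s | nrm s = 1]] -> 0 <= sphere_sup F.
Proof.
move=> ub; have [[s0 s01]|no_unit] := pselect (exists s0, nrm s0 = 1).
  by apply: (le_trans (normr_ge0 (F s0))); apply: ub_le_sup => //; exists s0.
by rewrite /sphere_sup sup_out // => -[[_ [s s1 _]] _]; apply: no_unit; exists s.
Qed.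

Lemma sphere_sup_homogeneous (F : 'cV[R]_n -> R) (k : nat) (s : 'cV[R]_n) :
  has_ubound [set `|F s| | s in [set s | nrm s = 1]] -> (0 < k)%N ->
  (forall (a : R) x, F (a *: x) = a ^+ k * F x) ->
  `|F s| <= sphere_sup F * nrm s ^+ k.
Proof.
move=> ub k0 Fhom; have [->|s0] := eqVneq s 0.
  rewrite -(scale0r 0) Fhom expr0n (gtn_eqF k0) mul0r normr0.
  by rewrite mulr_ge0 ?sphere_sup_ge0 ?exprn_ge0 ?(nrm_ge0 nrm_norm).
have rpos : 0 < nrm s by rewrite lt_def (nrm_eq0 nrm_norm) s0 (nrm_ge0 nrm_norm).
have s1 : nrm ((nrm s)^-1 *: s) = 1.
  by rewrite (nrmZ nrm_norm) ger0_norm ?mulVf ?gt_eqF // invr_ge0 (nrm_ge0 nrm_norm).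
have : `|F ((nrm s)^-1 *: s)| <= sphere_sup F by apply: ub_le_sup => //; exists ((nrm s)^-1 *: s).
have rk_ge0 : 0 <= (nrm s)^-1 ^+ k by rewrite exprn_ge0 // invr_ge0; exact: ltW.
by rewrite Fhom normrM (ger0_norm rk_ge0) exprVn mulrC ler_pdivrMr // exprn_gt0.
Qed.

Lemma dotp_sphere_bounded (v : 'cV[R]_n) :
  has_ubound [set `|dotp v s| | s in [set s | nrm s = 1]].
Proof.
have [C C0 hC] := unit_sphere_coord_bound nrm_norm.
exists (\sum_(i < n) `|v i 0| * C) => _ [s s1 <-].
apply: (le_trans (ler_norm_sum _ _ _)); apply: ler_sum => i _.
by rewrite normrM ler_wpM2l // hC.
Qed.

Lemma quad_form_sphere_bounded (H : 'M[R]_n) :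
  has_ubound [set `|dotp (H *m v) v| | v in [set v | nrm v = 1]].
Proof.
have [C C0 hC] := unit_sphere_coord_bound nrm_norm.
exists (\sum_(i < n) (\sum_(j < n) `|H i j| * C) * C) => _ [s s1 <-].
apply: (le_trans (ler_norm_sum _ _ _)); apply: ler_sum => i _.
rewrite normrM ler_pM ?hC // mxE; apply: (le_trans (ler_norm_sum _ _ _)).
by apply: ler_sum => j _; rewrite normrM ler_wpM2l // hC.
Qed.

Lemma dual_norm_ge0 (v : 'cV[R]_n) : 0 <= dual_norm nrm v.
Proof. exact/sphere_sup_ge0/dotp_sphere_bounded. Qed.

Lemma mat_norm2_ge0 (H : 'M[R]_n) : 0 <= mat_norm2 nrm H.
Proof. exact/sphere_sup_ge0/quad_form_sphere_bounded. Qed.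

Lemma nrm_gt0_of_dual_norm_lt (v s : 'cV[R]_n) (c : R) :
  dual_norm nrm v < c * nrm s ^+ 2 -> 0 < nrm s.
Proof.
move=> Dlt; rewrite lt_def (nrm_ge0 nrm_norm) andbT; apply: contraTneq Dlt => ->.
by rewrite expr0n mulr0 -leNgt dual_norm_ge0.
Qed.

Lemma dotp_le_dual_norm (v s : 'cV[R]_n) :
  `|dotp v s| <= dual_norm nrm v * nrm s.
Proof.
rewrite -[nrm s]expr1; apply: sphere_sup_homogeneous (dotp_sphere_bounded v) _ _ => //.
by move=> a x; rewrite dotpZr expr1.
Qed.

Lemma quad_form_le_mat_norm2 (H : 'M[R]_n) (s : 'cV[R]_n) :
  `|dotp (H *m s) s| <= mat_norm2 nrm H * nrm s ^+ 2.
Proof.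
apply: sphere_sup_homogeneous (quad_form_sphere_bounded H) _ _ => //.
by move=> a x; rewrite quad_formZ.
Qed.

End SphereSup.

Arguments dual_norm_ge0 {R n nrm}.
Arguments mat_norm2_ge0 {R n nrm}.
Arguments nrm_gt0_of_dual_norm_lt {R n nrm}.
Arguments dotp_le_dual_norm {R n nrm}.
Arguments quad_form_le_mat_norm2 {R n nrm}.

(* The cubic model along the ray through s, as a function of the scale t,
   with c = <g, s>, q = <Hs, s> and rho = ||s||. *)
Definition ray_model {R : realType} (c q rho sigma t : R) : R :=
  t * c + 2^-1 * t ^+ 2 * q + 6^-1 * sigma * (t * rho) ^+ 3.

Lemma cubic_model_ray (R : realType) (n : nat) (nrm : 'cV[R]_n -> R)
    (f0 : R) (g : 'cV[R]_n) (H : 'M[R]_n) (sigma t : R) (s : 'cV[R]_n) :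
  is_norm nrm -> 0 <= t ->
  cubic_model nrm f0 g H sigma (t *: s)
    = f0 + ray_model (dotp g s) (dotp (H *m s) s) (nrm s) sigma t.
Proof.
move=> nrm_norm t0; rewrite /cubic_model /ray_model dotpZr quad_formZ (nrmZ nrm_norm).
by rewrite ger0_norm // mulrA !addrA.
Qed.

Lemma ray_model_decrease {R : realType} {c q rho sigma D M : R} :
  0 < sigma -> 0 <= D -> 0 <= M -> D < 2^-1 * sigma * rho ^+ 2 -> 0 < rho ->
  - (D * rho) <= c + q -> q <= M * rho ^+ 2 ->
  let d := 2^-1 * sigma * rho ^+ 2 - D in
  let K := M + sigma * rho in
  let a := d / (rho * K) in
  [/\ 0 <= a, a <= 1
    & 2^-1 * (d ^+ 2 / K) <= ray_model c q rho sigma 1 - ray_model c q rho sigma (1 - a)].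
Proof.
move=> sigma0 D0 M0 Dlt rho0 cq_lb q_ub d K a.
have dpos : 0 < d by rewrite subr_gt0.
have Kpos : 0 < K by rewrite ltr_wpDl // mulr_gt0.
have sr2 : 0 <= sigma * rho ^+ 2 := mulr_ge0 (ltW sigma0) (exprn_ge0 2 (ltW rho0)).
have sr3 : 0 <= sigma * rho ^+ 3 := mulr_ge0 (ltW sigma0) (exprn_ge0 3 (ltW rho0)).
have a0 : 0 <= a := divr_ge0 (ltW dpos) (ltW (mulr_gt0 rho0 Kpos)).
have a1 : a <= 1.
  rewrite ler_pdivrMr ?mulr_gt0 // mul1r mulrDr.
  have : 0 <= rho * M := mulr_ge0 (ltW rho0) M0.
  have -> : rho * (sigma * rho) = sigma * rho ^+ 2 by rewrite expr2; ring.
  rewrite /d; lra.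
split => //.
have expand : ray_model c q rho sigma 1 - ray_model c q rho sigma (1 - a)
    = a * (c + q + 2^-1 * sigma * rho ^+ 3) - 2^-1 * a ^+ 2 * (q + sigma * rho ^+ 3)
      + 6^-1 * a ^+ 3 * (sigma * rho ^+ 3).
  by rewrite /ray_model; field.
have linear_lb : a * (rho * d) <= a * (c + q + 2^-1 * sigma * rho ^+ 3).
  by rewrite ler_wpM2l // /d; nra.
have quad_ub : a ^+ 2 * (q + sigma * rho ^+ 3) <= a ^+ 2 * (rho ^+ 2 * K).
  by rewrite ler_wpM2l ?exprn_ge0 // /K; nra.
have cubic_ge0 : 0 <= a ^+ 3 * (sigma * rho ^+ 3) by rewrite mulr_ge0 ?exprn_ge0.
have optimal_step : a * (rho * d) - 2^-1 * (a ^+ 2 * (rho ^+ 2 * K)) = 2^-1 * (d ^+ 2 / K).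
  by rewrite /a; field; rewrite !gt_eqF.
rewrite expand -optimal_step; lra.
Qed.

(* The two generalized Cauchy-Schwarz bounds reduce it to ray_model_decrease. *)
Lemma cubic_model_decrease (R : realType) (n : nat) (nrm : 'cV[R]_n -> R)
    (f0 : R) (g : 'cV[R]_n) (H : 'M[R]_n) (sigma : R) (s : 'cV[R]_n) :
  is_norm nrm -> 0 < sigma ->
  dual_norm nrm (g + H *m s) < 2^-1 * sigma * nrm s ^+ 2 ->
  let d := 2^-1 * sigma * nrm s ^+ 2 - dual_norm nrm (g + H *m s) in
  let K := mat_norm2 nrm H + sigma * nrm s in
  exists2 a : R, 0 <= a &
    2^-1 * (d ^+ 2 / K)
      <= cubic_model nrm f0 g H sigma s - cubic_model nrm f0 g H sigma ((1 - a) *: s).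
Proof.
move=> nrm_norm sigma0 Dlt d K.
have D0 := dual_norm_ge0 nrm_norm (g + H *m s).
have M0 := mat_norm2_ge0 nrm_norm H.
have rho0 := nrm_gt0_of_dual_norm_lt nrm_norm _ _ _ Dlt.
have cq_lb : - (dual_norm nrm (g + H *m s) * nrm s) <= dotp g s + dotp (H *m s) s.
  rewrite -dotpDl; have := dotp_le_dual_norm nrm_norm (g + H *m s) s.
  by rewrite ler_norml => /andP[].
have q_ub : dotp (H *m s) s <= mat_norm2 nrm H * nrm s ^+ 2.
  by have := quad_form_le_mat_norm2 nrm_norm H s; rewrite ler_norml => /andP[].
have [a0 a1 decrease] := ray_model_decrease sigma0 D0 M0 Dlt rho0 cq_lb q_ub.
exists (d / (nrm s * K)) => //.
by rewrite -{1}[s]scale1r !cubic_model_ray ?subr_ge0 // opprD addrACA subrr add0r.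
Qed.

Theorem lemma5p3 (R : realType) (n : nat) (nrm : 'cV[R]_n -> R)
  (f0 : R) (g : 'cV[R]_n) (H : 'M[R]_n) (sigma : R)
  (sk : 'cV[R]_n) (alphaR : R) :
  is_norm nrm ->
  H^T = H ->
  0 < sigma ->
  cubic_model nrm f0 g H sigma sk <= cubic_model nrm f0 g H sigma 0 ->
  dual_norm nrm (g + H *m sk) < 2^-1 * sigma * nrm sk ^+ 2 ->
  0 <= alphaR ->
  (forall a : R, 0 <= a ->
     cubic_model nrm f0 g H sigma (sk - alphaR *: sk)
       <= cubic_model nrm f0 g H sigma (sk - a *: sk)) ->
  let gk := g + H *m sk in
  let d := `| dual_norm nrm gk - 2^-1 * sigma * nrm sk ^+ 2 | in
  cubic_model nrm f0 g H sigma sk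
    - cubic_model nrm f0 g H sigma ((1 - alphaR) *: sk)
  >= 2^-1 * Num.min
       (d ^+ 2 / (1 + 3 / 2 * (mat_norm2 nrm H + sigma * nrm sk)))
       (d `^ (3 / 2) / (3 * Num.sqrt sigma)).
Proof.
move=> nrm_norm _ sigma0 _ Dlt _ alphaR_min /=.
have [a a0 decrease] := cubic_model_decrease _ _ _ f0 _ _ _ _ nrm_norm sigma0 Dlt.
set D := dual_norm nrm (g + H *m sk) in Dlt decrease *.
set d := 2^-1 * sigma * nrm sk ^+ 2 - D in decrease.
set K := mat_norm2 nrm H + sigma * nrm sk in decrease *.
have dpos : 0 < d by rewrite subr_gt0.
have Kpos : 0 < K.
  rewrite ltr_wpDl ?(mat_norm2_ge0 nrm_norm) ?mulr_gt0 //.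
  exact: nrm_gt0_of_dual_norm_lt nrm_norm _ _ _ Dlt.
have -> : `|D - 2^-1 * sigma * nrm sk ^+ 2| = d by rewrite ltr0_norm ?opprB // subr_lt0.
have first_term : d ^+ 2 / (1 + 3 / 2 * K) <= d ^+ 2 / K.
  by rewrite ler_pM2l ?exprn_gt0 // lef_pV2 ?posrE //; lra.
have alphaR_le : cubic_model nrm f0 g H sigma ((1 - alphaR) *: sk)
    <= cubic_model nrm f0 g H sigma ((1 - a) *: sk).
  by rewrite !scalerBl !scale1r; exact: alphaR_min.
apply: (@le_trans _ _ (2^-1 * (d ^+ 2 / K))); last by lra.
by rewrite ler_wpM2l // ge_min first_term.
Qed.
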